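(* Let $q$ be a prime power with $q=3m+1$, and let $a\in D_1^3\cup D_2^3$. Let $$M=\begin{pmatrix}1&a^2&a\\ a^{-2}&1&a^{-1}\\ a^{-1}&a&1\end{pmatrix}.$$ Then the $3\times 3$ block matrix whose $(i,j)$ block is $C_{M_{ij}}$ is the adjacency matrix of a directed strongly regular graph with parameters $(3(3m+1),\ 3m,\ m,\ m-1,\ m)$.
   Context: Fix a primitive element $\gamma$ of $\mathbb{F}_q$; $D_i^e=\gamma^i\langle\gamma^e\rangle$ ($e\mid q-1$) are the cyclotomic classes, here with $e=3$. For $\sigma\in\mathbb{F}_q^*$, $C_\sigma$ is the $q\times q$ $0$-$1$ matrix with rows and columns indexed by $\mathbb{F}_q$ and $(C_\sigma)_{x,y}=1$ iff $x\in\sigma y+D_0^e$. A directed strongly regular graph with parameters $(v,k,t,\lambda,\mu)$ is a digraph (no loops, no multiple arcs) on $v$ vertices whose adjacency matrix $A$ satisfies $A^2=tI+\lambda A+\mu(J-I-A)$ and $AJ=JA=kJ$. *)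

From HB Require Import structures.
From mathcomp Require Import all_boot all_order all_algebra all_field.
Set Implicit Arguments. Unset Strict Implicit. Unset Printing Implicit Defensive.
Import GRing.Theory.
Local Open Scope ring_scope.

(* Cyclotomic class D_i^e = gamma^i <gamma^e> in F_q^*.  Exponents k range over
   0..q-1, which covers all of <gamma^e> since gamma has order q-1. *)
Definition cyc_class (F : finFieldType) (gamma : F) (e i : nat) : {set F} :=
  [set x : F | [exists k : 'I_#|F|, x == gamma ^+ (i + e * k)%N]].

Definition Centry (F : finFieldType) (gamma : F) (e : nat) (sigma x y : F) : bool :=
  (x - sigma * y) \in cyc_class gamma e 0.

Definition adj_mx (V : finType) (R : V -> V -> bool) : 'M[int]_#|V| :=
  \matrix_(i, j) (R (enum_val i) (enum_val j))%:R.

Definition is_dsrg (n : nat) (A : 'M[int]_n) (v k t l mu : nat) : Prop :=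
  [/\ n = v,
      (forall i j, A i j = 0 \/ A i j = 1) /\ (forall i, A i i = 0),
      A *m A = t%:R%:M + l%:R *: A + mu%:R *: ((const_mx 1 : 'M[int]_n) - 1%:M - A),
      A *m (const_mx 1 : 'M[int]_n) = k%:R *: (const_mx 1 : 'M[int]_n) &
      (const_mx 1 : 'M[int]_n) *m A = k%:R *: (const_mx 1 : 'M[int]_n)].

Definition Mmat (F : finFieldType) (a : F) (i j : 'I_3) : F :=
  match nat_of_ord i, nat_of_ord j with
  | O, O => 1 | O, S O => a ^+ 2 | O, _ => a
  | S O, O => a ^- 2 | S O, S O => 1 | S O, _ => a^-1
  | _, O => a^-1 | _, S O => a | _, _ => 1
  end.

(* Block matrix whose (i,j) block is C_{M_ij}, with e = 3; vertices ('I_3 * F). *)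
Definition block_rel (F : finFieldType) (gamma a : F) (u w : 'I_3 * F) : bool :=
  Centry gamma 3 (Mmat a u.1 w.1) u.2 w.2.

From mathcomp Require Import all_boot all_order all_algebra all_field.
From mathcomp Require Import ring zify.
Set Implicit Arguments. Unset Strict Implicit. Unset Printing Implicit Defensive.
Import GRing.Theory.
Local Open Scope ring_scope.

(* Since q - 1 = 3m, the class D_0 is the group of m-th roots of unity, and for
   a in D_1 or D_2 the element a^m is a primitive cube root of unity; hence for
   every t <> 0 exactly one of a t, a^-1 t, t lies in D_0.  Writing
   M_ij = s_i / s_j with s = (a, a^-1, 1), there is an arc (i,x) -> (j,z) iff
   s_i (x / s_i - z / s_j) lies in D_0.  Each block C_sigma has all row and
   column sums |D_0| = m.  Parametrising the middle vertex of a 2-path as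
   (k, s_k (z / s_j + r)), the sum over k of the arc condition at r is
   [r <> 0] by the partition property, so the number of 2-paths from u to w
   is m - [u -> w]. *)

Lemma sum_enum_val_natr (V : finType) (R : pzSemiRingType) (G : V -> nat) :
  \sum_(i < #|V|) (G (enum_val i))%:R = (\sum_v G v)%:R :> R.
Proof. by rewrite natr_sum (reindex _ (onW_bij _ (enum_val_bij V))). Qed.

Lemma adj_mx_dsrg (V : finType) (R : rel V) (v k t l mu : nat) :
  #|V| = v -> irreflexive R ->
  (forall u, (\sum_w R u w)%N = k) -> (forall w, (\sum_u R u w)%N = k) ->
  (forall u w, (\sum_x (R u x && R x w))%N =
     if u == w then t else if R u w then l else mu) ->
  is_dsrg (adj_mx R) v k t l mu.
Proof.
move=> card_V R_irr out_deg in_deg paths; split=> //.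
- split=> [p q | p]; rewrite mxE ?R_irr //.
  by case: (R _ _); [right | left].
- apply/matrixP=> p q; rewrite !mxE.
  under eq_bigr => x _ do rewrite !mxE -natrM mulnb.
  rewrite (sum_enum_val_natr _ (fun x => R _ x && R x _)) paths.
  rewrite (inj_eq enum_val_inj).
  have [-> | _] := eqVneq p q; first by rewrite R_irr; lia.
  by case: (R _ _); lia.
- apply/matrixP=> p q; rewrite !mxE.
  under eq_bigr => x _ do rewrite !mxE mulr1.
  by rewrite (sum_enum_val_natr _ (R _)) out_deg mulr1.
- apply/matrixP=> p q; rewrite !mxE.
  under eq_bigr => x _ do rewrite !mxE mul1r.
  by rewrite (sum_enum_val_natr _ (R^~ _)) in_deg mulr1.
Qed.

Section CyclotomicClasses.

Variables (F : finFieldType) (e m : nat) (gamma : F).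
Hypotheses (card_F : #|F| = (e * m + 1)%N)
           (gamma_prim : (#|F|.-1).-primitive_root gamma).

Local Notation D0 := (cyc_class gamma e 0).

Lemma gamma_prim_order : (e * m).-primitive_root gamma.
Proof. by move: gamma_prim; rewrite card_F addn1. Qed.

Lemma cyc_index_gt0 : (0 < e)%N /\ (0 < m)%N.
Proof. by apply/andP; rewrite -muln_gt0 (prim_order_gt0 gamma_prim_order). Qed.

Lemma prim_root_cyc_class0 : m.-primitive_root (gamma ^+ e).
Proof.
have := dvdn_prim_root gamma_prim_order (dvdn_mull e (dvdnn m)).
by rewrite mulnK //; case: cyc_index_gt0.
Qed.

Lemma cyc_class0E t : (t \in D0) = (t ^+ m == 1).
Proof.
rewrite inE; apply/existsP/eqP => [[k /eqP ->] | tm1].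
  by rewrite add0n -exprM mulnAC exprM (prim_expr_order gamma_prim_order) expr1n.
have [i ->] := prim_rootP prim_root_cyc_class0 tm1.
have i_lt : (i < #|F|)%N.
  by have [e_gt0 _] := cyc_index_gt0; have := ltn_ord i; rewrite card_F; nia.
by exists (Ordinal i_lt); rewrite add0n exprM.
Qed.

Lemma zero_notin_cyc_class0 : 0 \notin D0.
Proof.
have [_ m_gt0] := cyc_index_gt0.
by rewrite cyc_class0E expr0n gtn_eqF // eq_sym oner_eq0.
Qed.

Lemma card_cyc_class0 : #|D0| = m.
Proof.
have -> : D0 = [set gamma ^+ e ^+ i | i : 'I_m].
  apply/setP=> t; rewrite cyc_class0E; apply/eqP/imsetP => [tm1 | [i _ ->]].
    by have [i ->] := prim_rootP prim_root_cyc_class0 tm1; exists i.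
  by rewrite -!exprM mulnAC exprM (prim_expr_order gamma_prim_order) expr1n.
rewrite card_imset ?card_ord // => i j /eqP.
by rewrite (eq_prim_root_expr prim_root_cyc_class0) !modn_small // => /eqP/val_inj.
Qed.

Lemma sum_cyc_class0_inj (h : F -> F) :
  injective h -> (\sum_y (h y \in D0))%N = m.
Proof.
move=> h_inj; rewrite -card_cyc_class0 -(card_preimset D0 h_inj) -sum1_card.
rewrite [RHS]big_mkcond; apply: eq_bigr => y _.
by rewrite [y \in _]inE; case: (_ \in _).
Qed.

Lemma sum_Centry_row sigma x :
  sigma != 0 -> (\sum_y Centry gamma e sigma x y)%N = m.
Proof.
move=> sigma_neq0; apply: sum_cyc_class0_inj => y1 y2.
by move/(addrI x)/oppr_inj/(mulfI sigma_neq0).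
Qed.

Lemma sum_Centry_col sigma y : (\sum_x Centry gamma e sigma x y)%N = m.
Proof. by apply: sum_cyc_class0_inj => x1 x2 /addIr. Qed.

Lemma prim_root_cyc_class i b :
  coprime i e -> b \in cyc_class gamma e i -> e.-primitive_root (b ^+ m).
Proof.
move=> co_i_e; rewrite inE => /existsP[k /eqP ->].
have gm_prim : e.-primitive_root (gamma ^+ m).
  have := dvdn_prim_root gamma_prim_order (dvdn_mulr m (dvdnn e)).
  by rewrite mulKn //; case: cyc_index_gt0.
rewrite exprAC (prim_root_exp_coprime _ gm_prim) -coprime_modl.
by rewrite addnC (mulnC e) modnMDl coprime_modl.
Qed.

End CyclotomicClasses.

Lemma expf_card_pred (F : finFieldType) (t : F) : t != 0 -> t ^+ #|F|.-1 = 1.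
Proof.
move=> t_neq0; apply: (mulIf t_neq0).
by rewrite mul1r -exprSr prednK ?expf_card // (ltnW (finNzRing_gt1 F)).
Qed.

Definition Mscale (F : fieldType) (a : F) (i : 'I_3) : F :=
  match nat_of_ord i with O => a | S O => a^-1 | _ => 1 end.

Lemma Mscale_neq0 (F : fieldType) (a : F) i : a != 0 -> Mscale a i != 0.
Proof.
by move=> a_neq0; case: i => -[|[|[|i]]] ?; rewrite /Mscale /= ?invr_eq0 ?oner_eq0.
Qed.

Lemma MmatE (F : finFieldType) (a : F) i j :
  a != 0 -> Mmat a i j = Mscale a i / Mscale a j.
Proof.
move=> a_neq0; case: i => -[|[|[|i]]] ?; case: j => -[|[|[|j]]] ? //;
  by rewrite /Mmat /Mscale /=; field; rewrite ?a_neq0 ?oner_eq0.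
Qed.

Lemma sum_prod (I J : finType) (G : I * J -> nat) :
  (\sum_v G v = \sum_i \sum_j G (i, j))%N.
Proof. by rewrite pair_bigA; apply: eq_bigr => -[i j]. Qed.

Section BlockGraph.

Variables (F : finFieldType) (m : nat) (gamma a : F).
Hypotheses (card_F : #|F| = (3 * m + 1)%N)
           (gamma_prim : (#|F|.-1).-primitive_root gamma)
           (a_in : a \in cyc_class gamma 3 1 :|: cyc_class gamma 3 2).

Local Notation D0 := (cyc_class gamma 3 0).
Local Notation R := (block_rel gamma a).
Local Notation s := (Mscale a).

Lemma prim_root_a : 3.-primitive_root (a ^+ m).
Proof. by case/setUP: a_in; apply: prim_root_cyc_class. Qed.

Lemma a_neq0 : a != 0.
Proof.
have [_ m_gt0] := cyc_index_gt0 card_F gamma_prim.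
by have := prim_root_eq0 prim_root_a; rewrite expf_eq0 m_gt0 /= => ->.
Qed.

Lemma cyc_class0_partition t :
  t != 0 -> (((a * t)%R \in D0) + ((a^-1 * t)%R \in D0) + (t \in D0))%N = 1%N.
Proof.
move=> t_neq0.
have /(prim_rootP prim_root_a)[j tmE] : (t ^+ m) ^+ 3 = 1.
  by rewrite -exprM mulnC -(expf_card_pred t_neq0) card_F addn1.
set w := a ^+ m in tmE *.
have w_neq0 : w != 0 by rewrite expf_neq0 ?a_neq0.
have w_inv : w^-1 = w ^+ 2.
  by apply: (mulfI w_neq0); rewrite mulfV // -exprS (prim_expr_order prim_root_a).
rewrite !(cyc_class0E card_F gamma_prim) !exprMn exprVn -/w w_inv tmE.
rewrite -exprS -exprD -!(prim_order_dvd prim_root_a).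
by case: j {tmE} => -[|[|[|j]]].
Qed.

Lemma Mmat_neq0 i j : Mmat a i j != 0.
Proof. by rewrite MmatE ?a_neq0 // mulf_neq0 ?invr_eq0 ?Mscale_neq0 ?a_neq0. Qed.

Lemma block_rel_irrefl : irreflexive R.
Proof.
move=> [i x]; rewrite /block_rel /Centry MmatE ?a_neq0 //.
rewrite mulfV ?Mscale_neq0 ?a_neq0 //.
by rewrite mul1r subrr (negbTE (zero_notin_cyc_class0 card_F gamma_prim)).
Qed.

Lemma block_out_degree u : (\sum_w R u w)%N = (3 * m)%N.
Proof.
rewrite sum_prod (eq_bigr (fun=> m)) => [|j _].
  by rewrite big_const_ord iter_addn_0 mulnC.
exact: sum_Centry_row (Mmat_neq0 _ _).
Qed.

Lemma block_in_degree w : (\sum_u R u w)%N = (3 * m)%N.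
Proof.
rewrite sum_prod (eq_bigr (fun=> m)) => [|i _].
  by rewrite big_const_ord iter_addn_0 mulnC.
exact: sum_Centry_col.
Qed.

Lemma block_relE i x j z :
  R (i, x) (j, z) = (s i * (x / s i - z / s j) \in D0).
Proof.
rewrite /block_rel /Centry MmatE ?a_neq0 //=.
suff -> : x - s i / s j * z = s i * (x / s i - z / s j) by [].
by field; rewrite !Mscale_neq0 ?a_neq0.
Qed.

Lemma sum_Mscale_cyc_class0 r : (\sum_k ((s k * r)%R \in D0))%N = (r != 0).
Proof.
rewrite !big_ord_recr big_ord0 /=.
have [-> | r_neq0] := eqVneq r 0.
  by rewrite !mulr0 (negbTE (zero_notin_cyc_class0 card_F gamma_prim)).
by rewrite /Mscale /= mul1r cyc_class0_partition.
Qed.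

Lemma block_paths u w : (\sum_x (R u x && R x w) + R u w)%N = m.
Proof.
case: u w => [i x] [j z]; set W := x / s i - z / s j.
have s_neq0 k : s k != 0 by rewrite Mscale_neq0 ?a_neq0.
pose A r := (s i * (W - r))%R \in D0.
have paths_via k : (\sum_y (R (i, x) (k, y) && R (k, y) (j, z)))%N =
    (\sum_r (A r && ((s k * r)%R \in D0)))%N.
  have shift_inj : injective (fun r => s k * (z / s j + r)).
    by move=> r1 r2 /(mulfI (s_neq0 k))/addrI.
  rewrite (reindex_inj shift_inj); apply: eq_bigr => r _; rewrite !block_relE.
  have -> : s i * (x / s i - s k * (z / s j + r) / s k) = s i * (W - r).
    by rewrite /W; field; rewrite ?s_neq0.
  suff -> : s k * (s k * (z / s j + r) / s k - z / s j) = s k * r by [].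
  by field; rewrite ?s_neq0.
have paths_via_r r :
    (\sum_k (A r && ((s k * r)%R \in D0)))%N = A r && (r != 0).
  rewrite -mulnb -sum_Mscale_cyc_class0 big_distrr.
  by apply: eq_bigr => k _; rewrite /= mulnb.
rewrite sum_prod (eq_bigr _ (fun k _ => paths_via k)) exchange_big /=.
rewrite (eq_bigr _ (fun r _ => paths_via_r r)).
have A_sum : (\sum_r A r)%N = m.
  apply: (sum_cyc_class0_inj card_F gamma_prim) => r1 r2.
  by move/(mulfI (s_neq0 i))/addrI/oppr_inj.
rewrite block_relE -/W -[W]subr0 -/(A 0) -{}A_sum.
rewrite (bigD1 0) //= [RHS](bigD1 0) //=.
rewrite eqxx andbF add0n addnC; congr (_ + _)%N.
by apply: eq_bigr => r ->; rewrite andbT.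
Qed.

End BlockGraph.

Theorem mainTheorem9 (F : finFieldType) (m : nat) (gamma a : F) :
  #|F| = (3 * m + 1)%N ->
  (#|F|.-1).-primitive_root gamma ->
  a \in cyc_class gamma 3 1 :|: cyc_class gamma 3 2 ->
  is_dsrg (adj_mx (block_rel gamma a))
    (3 * (3 * m + 1)) (3 * m) m (m - 1) m.
Proof.
move=> card_F gamma_prim a_in.
have irr := block_rel_irrefl card_F gamma_prim a_in.
apply: adj_mx_dsrg => //.
- by rewrite card_prod card_ord card_F.
- exact: block_out_degree card_F gamma_prim a_in.
- exact: block_in_degree card_F gamma_prim.
move=> u w; have := block_paths card_F gamma_prim a_in u w.
have [-> | _] := eqVneq u w; first by rewrite irr addn0.
by case: (block_rel _ _ u w) => /=; lia.
Qed.
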